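(* Let $G_*$ be an operadic crossed simplicial group and let $\Gamma_n=G_n/\!\!/P_n$ be its action groupoids. For $n,m\ge0$ and $0\le i\le n$ define $\circ_i\colon\Gamma_n\times\Gamma_m\to\Gamma_{n+m}$ by $$[\sigma,f]\circ_i[\tau,g]=[\sigma\circ_i\tau,\,(f^{-1}\circ_{\sigma^{-1}(i)}g^{-1})^{-1}],$$ where $\sigma\circ_i\tau$ is the set-operad composition on $S_*$ and $f^{-1}\circ_{\sigma^{-1}(i)}g^{-1}$ is the set-operad composition on $G_*$ (both described in the context). Then each $\circ_i$ is a functor of groupoids, and the sequence of groupoids $\{\Gamma_n\}_{n\ge0}$ with the operations $\circ_i$ and the simplicial face maps $d_j$ of $\Gamma_*$ forms a shifted operad in $\textsf{Gpd}$.
   Context: A crossed simplicial group $G_*$: groups $G_n$ ($n\ge0$) with a left action of $G_n$ on $[n]=\{0,\dots,n\}$ and maps $d_i,s_i$ forming a simplicial set with $d_i(gh)=d_i(g)d_{g^{-1}(i)}(h)$, $s_i(gh)=s_i(g)s_{g^{-1}(i)}(h)$. By the Fiedorowicz–Loday structure theorem there is a canonical short exact sequence $1\to P_*\to G_*\xrightarrow{\pi}N_*\to1$ with $P_*$ a simplicial group acting trivially on each $[n]$. $G_*$ is symmetric if $N_*=S_*$, the symmetric crossed simplicial group with $S_n=\mathrm{Bij}([n])$. On $S_*$ let $s_L(\sigma)=(0,\sigma(0)+1,\dots,\sigma(n)+1)$ and $s_R(\sigma)=(\sigma(0),\dots,\sigma(n),n+1)$ (adding a fixed point on the left, resp. right).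 A symmetric crossed simplicial group is ambi contractible if equipped with a left contraction (extra degeneracy) $s_L=s_{-1}\colon G_n\to G_{n+1}$ and right contraction $s_R=s_{n+1}\colon G_n\to G_{n+1}$, both group homomorphisms compatible with $s_L,s_R$ on $S_*$ via $\pi$. It is monoidal if $(\alpha,\beta)\mapsto s_R^{m+1}(\alpha)\cdot s_L^{n+1}(\beta)$, $G_n\times G_m\to G_{n+m+1}$, is a group homomorphism. Notation: for $\beta\in G_m$ and $a,b\ge0$, $1_a\boxplus\beta\boxplus1_b:=s_L^a(s_R^b(\beta))\in G_{m+a+b}$. A monoidal crossed simplicial group is operadic if for all $\alpha\in G_n$, $\beta\in G_m$, $0\le i\le n$: $(1_i\boxplus\beta\boxplus1_{n-i})\cdot s_i^m(\alpha)=s_i^m(\alpha)\cdot(1_{\alpha^{-1}(i)}\boxplus\beta\boxplus1_{n-\alpha^{-1}(i)})$, where $s_i^m$ is the $m$-fold iterate of $s_i$. The set-operad composition on $G_*$ (and likewise on $S_*$, which is itself operadic) is $\alpha\circ_i\beta=(1_i\boxplus\beta\boxplus1_{n-i})\cdot s_i^m(\alpha)\in G_{n+m}$ for $\alpha\in G_n,\beta\in G_m$, $0\le i\le n$. The action groupoid $\Gamma_n=G_n/\!\!/P_n$ has objects $\sigma\in G_n/P_n\cong S_n$ and morphisms $[\sigma,f]\colon\sigma\to\sigma\pi(f)^{-1}$ for $f\in G_n$, composed by $[\sigma\pi(f)^{-1},g]\cdot[\sigma,f]=[\sigma,gf]$; its face maps are $d_j[\sigma,f]=[d_j\sigma,d_{\sigma^{-1}(j)}(f^{-1})^{-1}]$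 (with $d_j\sigma$ in $S_*$, $\sigma^{-1}(j)$ the inverse permutation applied to $j$, and the outer $d$ that of $G_*$). A shifted operad in $\textsf{Gpd}$ (with cartesian product) is a semi-simplicial groupoid $\mathcal{U}( * )$ (faces $d_i\colon\mathcal{U}(n)\to\mathcal{U}(n-1)$) with functors $\circ_i\colon\mathcal{U}(n)\times\mathcal{U}(m)\to\mathcal{U}(n+m)$, $0\le i\le n$, such that: there is $\mathrm{id}\in\mathcal{U}(0)$ with $\mathrm{id}\circ_0\nu=\nu$, $\mu\circ_i\mathrm{id}=\mu$; $(\lambda\circ_i\mu)\circ_{i+j}\nu=\lambda\circ_i(\mu\circ_j\nu)$ ($\lambda\in\mathcal{U}(l),\mu\in\mathcal{U}(m),\nu\in\mathcal{U}(n)$, $0\le i\le l$, $0\le j\le m$); $(\lambda\circ_i\mu)\circ_{k+m}\nu=(\lambda\circ_k\nu)\circ_i\mu$ for $0\le i<k\le l$; $d_{i+j}(\lambda\circ_i\mu)=\lambda\circ_id_j(\mu)$; and for $0\le i<k\le l$, $d_i(\lambda\circ_k\nu)=d_i(\lambda)\circ_{k-1}\nu$ and $d_{k+m}(\lambda\circ_i\mu)=d_k(\lambda)\circ_i\mu$. *)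

From mathcomp Require Import all_boot fingroup perm.
Set Implicit Arguments. Unset Strict Implicit. Unset Printing Implicit Defensive.

Definition cast (X : nat -> Type) (a b : nat) (e : a = b) (x : X a) : X b :=
  eq_rect a X x b e.
Arguments cast X {a b} e x.

Fixpoint iterL (X : nat -> Type) (sl : forall k, X k -> X k.+1) (a n : nat)
  (x : X n) {struct a} : X (a + n) :=
  match a return X (a + n) with
  | 0 => x
  | a'.+1 => sl (a' + n) (iterL sl a' x)
  end.

Fixpoint iterD (X : nat -> Type) (s : forall k, nat -> X k -> X k.+1) (i m n : nat)
  (x : X n) {struct m} : X (m + n) :=
  match m return X (m + n) with
  | 0 => x
  | m'.+1 => s (m' + n) i (iterD s i m' x)
  end.

Lemma blk_eq (n m : nat) (i : 'I_n.+1) : i + (n - i + m) = n + m.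
Proof. by rewrite addnA subnKC // -ltnS. Qed.

(* 1_i [+] b [+] 1_{n-i} := s_L^i (s_R^{n-i} b), in X_{n+m} *)
Definition blk (X : nat -> Type) (sl sr : forall k, X k -> X k.+1)
  (n m : nat) (i : 'I_n.+1) (b : X m) : X (n + m) :=
  cast X (blk_eq m i) (iterL sl i (iterL sr (n - i) b)).

(* set-operad composition  a o_i b = (1_i [+] b [+] 1_{n-i}) . s_i^m(a) *)
Definition ocomp (X : nat -> Type) (sl sr : forall k, X k -> X k.+1)
  (s : forall k, nat -> X k -> X k.+1) (mul : forall k, X k -> X k -> X k)
  (n m : nat) (a : X n) (b : X m) (i : 'I_n.+1) : X (n + m) :=
  mul (n + m) (blk sl sr i b) (cast X (addnC m n) (iterD s i m a)).

(* The symmetric crossed simplicial group S_*, S_n = Bij([n]).                *)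
(* Group law written so that (smul s t) x = s (t x) (composition, left action).*)
Definition Sn (n : nat) := {perm 'I_n.+1}.

Definition smul (n : nat) (s t : Sn n) : Sn n := (t * s)%g.

(* face map: d_i(s) deletes s^{-1}(i) from the source and i from the target *)
Definition dfun n (s : {perm 'I_n.+2}) (k ii : 'I_n.+2) (x : 'I_n.+1) : 'I_n.+1 :=
  odflt x (unlift ii (s (lift k x))).

Lemma dfunK n (s : {perm 'I_n.+2}) (ii : 'I_n.+2) :
  cancel (dfun s (s^-1 ii)%g ii) (dfun s^-1 ii (s^-1 ii))%g.
Proof.
move=> x; rewrite /dfun.
have hne : ii != s (lift (s^-1 ii)%g x).
  by apply/eqP => h; have := neq_lift (s^-1 ii)%g x; rewrite {1}h permK eqxx.
case: (unlift_some hne) => y hy ->; rewrite /= -hy permK.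
by rewrite liftK.
Qed.

Definition sface (n i : nat) (s : Sn n.+1) : Sn n :=
  perm (can_inj (dfunK s (inord i))).

(* degeneracy s_i(s): doubles s^{-1}(i) in the source and i in the target *)
Definition sdeg (n i : nat) (s : Sn n) : Sn n.+1 :=
  lift_perm (lift ord0 (s^-1 (inord i))%g) (lift ord0 (inord i)) s.

Definition sL (n : nat) (s : Sn n) : Sn n.+1 := lift_perm ord0 ord0 s.
Definition sR (n : nat) (s : Sn n) : Sn n.+1 := lift_perm ord_max ord_max s.

Definition socomp (n m : nat) (s : Sn n) (t : Sn m) (i : 'I_n.+1) : Sn (n + m) :=
  ocomp sL sR sdeg smul s t i.

(* Faces d_i : G_{n+1} -> G_n are indexed by i in [n+1], degeneracies         *)
(* s_i : G_n -> G_{n+1} by i in [n]; the elements of [n] are 'I_n.+1.          *)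
Local Unset Implicit Arguments.
Record CSG := {
  G :> nat -> Type;
  gmul : forall n, G n -> G n -> G n;
  gone : forall n, G n;
  ginv : forall n, G n -> G n;
  gmulA : forall n x y z, gmul n x (gmul n y z) = gmul n (gmul n x y) z;
  gmul1 : forall n x, gmul n (gone n) x = x;
  gmulV : forall n x, gmul n (ginv n x) x = gone n;
  gact : forall n, G n -> 'I_n.+1 -> 'I_n.+1;
  gact1 : forall n x, gact n (gone n) x = x;
  gactM : forall n g h x, gact n (gmul n g h) x = gact n g (gact n h x);
  gface : forall n, nat -> G n.+1 -> G n;
  gdeg : forall n, nat -> G n -> G n.+1;
  gface_face : forall n (i j : nat) (x : G n.+2), i < j -> j <= n.+2 ->
    gface n i (gface n.+1 j x) = gface n j.-1 (gface n.+1 i x);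
  gface_deg_lt : forall n (i j : nat) (x : G n.+1), i < j -> j <= n.+1 ->
    gface n.+1 i (gdeg n.+1 j x) = gdeg n j.-1 (gface n i x);
  gface_deg_eq : forall n (j : nat) (x : G n), j <= n ->
    gface n j (gdeg n j x) = x /\ gface n j.+1 (gdeg n j x) = x;
  gface_deg_gt : forall n (i j : nat) (x : G n.+1), j.+1 < i -> i <= n.+2 ->
    gface n.+1 i (gdeg n.+1 j x) = gdeg n j (gface n i.-1 x);
  gdeg_deg : forall n (i j : nat) (x : G n), i <= j -> j <= n ->
    gdeg n.+1 i (gdeg n j x) = gdeg n.+1 j.+1 (gdeg n i x);
  gface_mul : forall n (i : 'I_n.+2) (g h : G n.+1),
    gface n i (gmul n.+1 g h) = gmul n (gface n i g) (gface n (gact n.+1 (ginv n.+1 g) i) h);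
  gdeg_mul : forall n (i : 'I_n.+1) (g h : G n),
    gdeg n i (gmul n g h) = gmul n.+1 (gdeg n i g) (gdeg n (gact n (ginv n g) i) h);
  (* left and right contraction maps s_L = s_{-1}, s_R = s_{n+1} (data) *)
  gsL : forall n, G n -> G n.+1;
  gsR : forall n, G n -> G n.+1
}.
Local Set Implicit Arguments.
Arguments gmul {c} n _ _.
Arguments gone c n.
Arguments ginv {c} n _.
Arguments gact {c n} _ _.
Arguments gface {c} n _ _.
Arguments gdeg {c} n _ _.
Arguments gsL {c n} _.
Arguments gsR {c n} _.

Lemma gact_inj (C : CSG) (n : nat) (g : C n) : injective (gact g).
Proof.
move=> x y H.
by rewrite -[x](gact1 C) -(gmulV C n g) gactM H -gactM gmulV gact1.
Qed.

Definition gpi (C : CSG) (n : nat) (g : C n) : Sn n := perm (@gact_inj C n g).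

Definition is_symmetric (C : CSG) : Prop :=
  (forall n (s : Sn n), exists g : C n, gpi g = s) /\
  (forall n (i : nat) (g : C n.+1), i <= n.+1 -> gpi (gface n i g) = sface i (gpi g)) /\
  (forall n (i : nat) (g : C n), i <= n -> gpi (gdeg n i g) = sdeg i (gpi g)).

(* ambi contractible: s_L = s_{-1} and s_R = s_{n+1} are extra degeneracies   *)
(* (satisfying the simplicial identities with index -1, resp. n+1), group     *)
Definition is_ambi_contractible (C : CSG) : Prop :=
  (forall n (g h : C n), gsL (gmul n g h) = gmul n.+1 (gsL g) (gsL h)) /\
  (forall n (g h : C n), gsR (gmul n g h) = gmul n.+1 (gsR g) (gsR h)) /\
  (forall n (x : C n), gface n 0 (gsL x) = x) /\
  (forall n (i : nat) (x : C n.+1), i <= n.+1 ->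
      gface n.+1 i.+1 (gsL x) = gsL (gface n i x)) /\
  (forall n (x : C n), gdeg n.+1 0 (gsL x) = gsL (gsL x)) /\
  (forall n (j : nat) (x : C n), j <= n ->
      gdeg n.+1 j.+1 (gsL x) = gsL (gdeg n j x)) /\
  (forall n (x : C n), gface n n.+1 (gsR x) = x) /\
  (forall n (i : nat) (x : C n.+1), i <= n.+1 ->
      gface n.+1 i (gsR x) = gsR (gface n i x)) /\
  (forall n (x : C n), gdeg n.+1 n.+1 (gsR x) = gsR (gsR x)) /\
  (forall n (j : nat) (x : C n), j <= n ->
      gdeg n.+1 j (gsR x) = gsR (gdeg n j x)) /\
  (forall n (g : C n), gpi (gsL g) = sL (gpi g)) /\
  (forall n (g : C n), gpi (gsR g) = sR (gpi g)).

Lemma mon_eq (n m : nat) : m.+1 + n = (n + m).+1.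
Proof. by rewrite addSn addnC. Qed.

Definition gmon (C : CSG) (n m : nat) (a : C n) (b : C m) : C (n + m).+1 :=
  gmul (n + m).+1 (cast C (mon_eq n m) (iterL (@gsR C) m.+1 a))
                  (iterL (@gsL C) n.+1 b : C (n + m).+1).

Definition is_monoidal (C : CSG) : Prop :=
  forall n m (a a' : C n) (b b' : C m),
    gmon (gmul n a a') (gmul m b b') = gmul (n + m).+1 (gmon a b) (gmon a' b').

Definition gblk (C : CSG) (n m : nat) (i : 'I_n.+1) (b : C m) : C (n + m) :=
  blk (@gsL C) (@gsR C) i b.

Definition gdegit (C : CSG) (n m : nat) (i : nat) (a : C n) : C (n + m) :=
  cast C (addnC m n) (iterD (@gdeg C) i m a).

Definition is_operadic (C : CSG) : Prop :=
  forall n m (a : C n) (b : C m) (i : 'I_n.+1),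
    gmul (n + m) (gblk i b) (gdegit m i a)
    = gmul (n + m) (gdegit m i a) (gblk (gact (ginv n a) i) b).

Definition gocomp (C : CSG) (n m : nat) (a : C n) (b : C m) (i : 'I_n.+1) : C (n + m) :=
  ocomp (@gsL C) (@gsR C) (@gdeg C) (@gmul C) a b i.

(* comp g f is "g after f" (defined when tgt f = src g).                      *)
Record SOpData := {
  Ob : nat -> Type;
  Mor : nat -> Type;
  src : forall n, Mor n -> Ob n;
  tgt : forall n, Mor n -> Ob n;
  idm : forall n, Ob n -> Mor n;
  comp : forall n, Mor n -> Mor n -> Mor n;
  dOb : forall n, nat -> Ob n.+1 -> Ob n;
  dMor : forall n, nat -> Mor n.+1 -> Mor n;
  cOb : forall n m, nat -> Ob n -> Ob m -> Ob (n + m);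
  cMor : forall n m, nat -> Mor n -> Mor m -> Mor (n + m)
}.

Definition is_groupoid (U : SOpData) (n : nat) : Prop :=
  (forall x : Ob U n, src (idm x) = x /\ tgt (idm x) = x) /\
  (forall f g : Mor U n, tgt f = src g ->
     src (comp g f) = src f /\ tgt (comp g f) = tgt g) /\
  (forall f : Mor U n, comp f (idm (src f)) = f /\ comp (idm (tgt f)) f = f) /\
  (forall f g h : Mor U n, tgt f = src g -> tgt g = src h ->
     comp h (comp g f) = comp (comp h g) f) /\
  (forall f : Mor U n, exists g : Mor U n,
     src g = tgt f /\ tgt g = src f /\
     comp g f = idm (src f) /\ comp f g = idm (tgt f)).

Definition is_functor (U : SOpData) (a b : nat)
  (Fo : Ob U a -> Ob U b) (Fm : Mor U a -> Mor U b) : Prop :=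
  (forall f, src (Fm f) = Fo (src f)) /\
  (forall f, tgt (Fm f) = Fo (tgt f)) /\
  (forall x, Fm (idm x) = idm (Fo x)) /\
  (forall f g, tgt f = src g -> Fm (comp g f) = comp (Fm g) (Fm f)).

Definition is_bifunctor (U : SOpData) (a b c : nat)
  (Fo : Ob U a -> Ob U b -> Ob U c) (Fm : Mor U a -> Mor U b -> Mor U c) : Prop :=
  (forall f g, src (Fm f g) = Fo (src f) (src g)) /\
  (forall f g, tgt (Fm f g) = Fo (tgt f) (tgt g)) /\
  (forall x y, Fm (idm x) (idm y) = idm (Fo x y)) /\
  (forall f f' g g', tgt f = src f' -> tgt g = src g' ->
     Fm (comp f' f) (comp g' g) = comp (Fm f' g') (Fm f g)).

Definition semisimplicial (X : nat -> Type) (d : forall n, nat -> X n.+1 -> X n) : Prop :=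
  forall n (i j : nat) (x : X n.+2), i < j -> j <= n.+2 ->
    d n i (d n.+1 j x) = d n j.-1 (d n.+1 i x).

Definition operad_laws (X : nat -> Type) (d : forall n, nat -> X n.+1 -> X n)
  (c : forall n m, nat -> X n -> X m -> X (n + m)) (e : X 0) : Prop :=
  (forall n (v : X n), c 0 n 0 e v = v) /\
  (forall n (u : X n) (i : nat), i <= n -> cast X (addn0 n) (c n 0 i u e) = u) /\
  (forall l m n (x : X l) (y : X m) (z : X n) (i j : nat), i <= l -> j <= m ->
     cast X (addnA l m n) (c l (m + n) i x (c m n j y z)) = c (l + m) n (i + j) (c l m i x y) z) /\
  (forall l m n (x : X l) (y : X m) (z : X n) (i k : nat), i < k -> k <= l ->
     cast X (addnAC l m n) (c (l + m) n (k + m) (c l m i x y) z) = c (l + n) m i (c l n k x z) y) /\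
  (forall l m (x : X l) (y : X m.+1) (i j : nat), i <= l -> j <= m.+1 ->
     d (l + m) (i + j) (cast X (addnS l m) (c l m.+1 i x y)) = c l m i x (d m j y)) /\
  (forall l n (x : X l.+1) (z : X n) (i k : nat), i < k -> k <= l.+1 ->
     d (l + n) i (cast X (addSn l n) (c l.+1 n k x z)) = c l n k.-1 (d l i x) z) /\
  (forall l m (x : X l.+1) (y : X m) (i k : nat), i < k -> k <= l.+1 ->
     d (l + m) (k + m) (cast X (addSn l m) (c l.+1 m i x y)) = c l m i (d l k x) y).

Definition is_shifted_operad (U : SOpData) : Prop :=
  (forall n, is_groupoid U n) /\
  (forall n (i : nat), i <= n.+1 -> is_functor (@dOb U n i) (@dMor U n i)) /\
  semisimplicial (@dOb U) /\ semisimplicial (@dMor U) /\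
  (forall n m (i : nat), i <= n -> is_bifunctor (@cOb U n m i) (@cMor U n m i)) /\
  exists e : Ob U 0,
    operad_laws (@dOb U) (@cOb U) e /\ operad_laws (@dMor U) (@cMor U) (idm e).

(* The action groupoids Gamma_n = G_n // P_n: objects sigma in S_n,          *)
(* morphisms [sigma, f] : sigma -> sigma pi(f)^{-1}, f in G_n.               *)
Definition GaMor (C : CSG) (n : nat) := (Sn n * C n)%type.

Definition Gamma (C : CSG) : SOpData := {|
  Ob := Sn;
  Mor := GaMor C;
  src := fun n p => p.1;
  tgt := fun n p => smul p.1 (gpi p.2)^-1%g;
  idm := fun n s => (s, gone C n);
  comp := fun n q p => (p.1, gmul n q.2 p.2);
  dOb := fun n j s => sface j s;
  dMor := fun n j p =>
    (sface j p.1, ginv n (gface n (p.1^-1 (inord j))%g (ginv n.+1 p.2)));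
  cOb := fun n m i s t => socomp s t (inord i);
  cMor := fun n m i p q =>
    (socomp p.1 q.1 (inord i),
     ginv (n + m) (gocomp (ginv n p.2) (ginv m q.2) (p.1^-1 (inord i))%g))
|}.

From Pilot Require Import Defs.
From mathcomp Require Import all_boot fingroup perm zify.
Set Implicit Arguments. Unset Strict Implicit. Unset Printing Implicit Defensive.

(* Every object of [Gamma_n] is [pi a] for some [a : G_n], and [pi] carries the set-operad
   composition [a o_i b = (1_i [+] b [+] 1_(n-i)) . s_i^m(a)] of [G_*] to that of [S_*].
   Hence each law of the shifted operad, on morphisms, reduces to an identity for [o_i] on
   [G_*] together with a formula for the positions [(a o_i b)^-1(j)]; the laws on objects
   are their images under the source map.  Units, sequential associativity and the face
   identities come from the simplicial and contraction identities.  Parallel associativity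
   also needs blocks at disjoint positions to commute, which is monoidality (after
   [s_L s_R = s_R s_L], itself a consequence of operadicity).  Functoriality of [o_i] is
   the interchange law [(f f') o_k (g g') = (f o_k g) (f' o_(f^-1 k) g')], i.e. operadicity. *)

Section SourceProjection.
Variable U : SOpData.
Hypothesis src_idm : forall n (x : Ob U n), src (idm x) = x.
Hypothesis src_dMor : forall n j (f : Mor U n.+1), src (dMor j f) = dOb j (src f).
Hypothesis src_cMor : forall n m i (f : Mor U n) (g : Mor U m),
  src (cMor i f g) = cOb i (src f) (src g).

Lemma src_cast a b (e : a = b) (f : Mor U a) : src (cast (Mor U) e f) = cast (Ob U) e (src f).
Proof. by case: b / e. Qed.

Lemma semisimplicial_src : semisimplicial (@dMor U) -> semisimplicial (@dOb U).
Proof.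
move=> ssU n i j x lt_ij le_j; move: (ssU n i j (idm x) lt_ij le_j).
by move/(congr1 (@src U _)); rewrite !src_dMor src_idm.
Qed.

Lemma operad_laws_src e :
  operad_laws (@dMor U) (@cMor U) (idm e) -> operad_laws (@dOb U) (@cOb U) e.
Proof.
move=> [unit_l [unit_r [assoc [assocC [face_in [face_lt face_gt]]]]]].
split; [|split; [|split; [|split; [|split; [|split]]]]].
- move=> n v; move/(congr1 (@src U _)): (unit_l n (idm v)).
  by rewrite src_cMor !src_idm.
- move=> n u i le_i; move/(congr1 (@src U _)): (unit_r n (idm u) i le_i).
  by rewrite src_cast src_cMor !src_idm.
- move=> l m n x y z i j le_i le_j.
  move/(congr1 (@src U _)): (assoc l m n (idm x) (idm y) (idm z) i j le_i le_j).
  by rewrite src_cast !src_cMor !src_idm.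
- move=> l m n x y z i k lt_ik le_k.
  move/(congr1 (@src U _)): (assocC l m n (idm x) (idm y) (idm z) i k lt_ik le_k).
  by rewrite src_cast !src_cMor !src_idm.
- move=> l m x y i j le_i le_j.
  move/(congr1 (@src U _)): (face_in l m (idm x) (idm y) i j le_i le_j).
  by rewrite src_dMor src_cast !src_cMor src_dMor !src_idm.
- move=> l n x z i k lt_ik le_k.
  move/(congr1 (@src U _)): (face_lt l n (idm x) (idm z) i k lt_ik le_k).
  by rewrite src_dMor src_cast !src_cMor src_dMor !src_idm.
- move=> l m x y i k lt_ik le_k.
  move/(congr1 (@src U _)): (face_gt l m (idm x) (idm y) i k lt_ik le_k).
  by rewrite src_dMor src_cast !src_cMor src_dMor !src_idm.
Qed.

End SourceProjection.

Section OperadicCSG.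
Variable C : CSG.
Implicit Types n m : nat.

(** * Group laws in each degree *)

Lemma gmulVr n (x : C n) : gmul n x (ginv n x) = gone C n.
Proof.
rewrite -[LHS](gmul1 C) -(gmulV C n (ginv n x)) -gmulA.
by rewrite (gmulA C n (ginv n x) x) (gmulV C) (gmul1 C) (gmulV C).
Qed.

Lemma gmulr1 n (x : C n) : gmul n x (gone C n) = x.
Proof. by rewrite -(gmulV C n x) gmulA gmulVr gmul1. Qed.

Lemma gmulI n (x y z : C n) : gmul n x y = gmul n x z -> y = z.
Proof.
move=> exy; rewrite -(gmul1 C n y) -(gmul1 C n z) -(gmulV C n x) -!gmulA.
by rewrite exy.
Qed.

Lemma ginvK n (x : C n) : ginv n (ginv n x) = x.
Proof. by apply: (@gmulI n (ginv n x)); rewrite gmulVr gmulV. Qed.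

Lemma ginvM n (x y : C n) : ginv n (gmul n x y) = gmul n (ginv n y) (ginv n x).
Proof.
apply: (@gmulI n (gmul n x y)); rewrite gmulVr.
by rewrite -gmulA (gmulA C n y) gmulVr gmul1 gmulVr.
Qed.

Lemma ginv1 n : ginv n (gone C n) = gone C n.
Proof. by rewrite -[LHS]gmulr1 gmulV. Qed.

Lemma gmorph1 n m (f : C n -> C m) :
  (forall x y, f (gmul n x y) = gmul m (f x) (f y)) -> f (gone C n) = gone C m.
Proof.
move=> fM; apply: (@gmulI m (f (gone C n))).
by rewrite -fM gmul1 gmulr1.
Qed.

Lemma gmorphV n m (f : C n -> C m) :
  (forall x y, f (gmul n x y) = gmul m (f x) (f y)) ->
  forall x, f (ginv n x) = ginv m (f x).
Proof.
move=> fM x; apply: (@gmulI m (f x)); rewrite gmulVr -fM gmulVr.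
exact: gmorph1.
Qed.

Lemma gactVK n (g : C n) : cancel (gact g) (gact (ginv n g)).
Proof. by move=> x; rewrite -gactM gmulV gact1. Qed.

Lemma gactKV n (g : C n) : cancel (gact (ginv n g)) (gact g).
Proof. by move=> x; rewrite -gactM gmulVr gact1. Qed.

Lemma gpiE n (g : C n) : gpi g =1 gact g.
Proof. by move=> x; rewrite permE. Qed.

Lemma gpiM n (g h : C n) : gpi (gmul n g h) = smul (gpi g) (gpi h).
Proof. by apply/permP => x; rewrite /smul permM !gpiE gactM. Qed.

Lemma gpiV n (g : C n) : gpi (ginv n g) = ((gpi g)^-1)%g.
Proof.
apply/permP => x; rewrite gpiE; apply: (@gact_inj C n g).
by rewrite gactKV -gpiE permKV.
Qed.

Lemma gpi1 n : gpi (gone C n) = 1%g.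
Proof. by apply/permP => x; rewrite gpiE gact1 perm1. Qed.

Lemma gface_mulE n i (g h : C n.+1) : i <= n.+1 ->
  gface n i (gmul n.+1 g h) =
  gmul n (gface n i g) (gface n (gact (ginv n.+1 g) (inord i)) h).
Proof. by move=> le_i; have := gface_mul C n (inord i) g h; rewrite inordK. Qed.

Lemma gdeg_mulE n i (g h : C n) : i <= n ->
  gdeg n i (gmul n g h) =
  gmul n.+1 (gdeg n i g) (gdeg n (gact (ginv n g) (inord i)) h).
Proof. by move=> le_i; have := gdeg_mul C n (inord i) g h; rewrite inordK. Qed.

(** * The graded group as a single type *)

(* All degrees in one type, so that [G_((l+m)+n)] and [G_(l+(m+n))] need no casts. *)
Definition tot := {n : nat & C n}.
Definition pack n (x : C n) : tot := existT _ n x.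
Definition dim (p : tot) : nat := projT1 p.

Definition tsL (p : tot) : tot := pack (gsL (projT2 p)).
Definition tsR (p : tot) : tot := pack (gsR (projT2 p)).
Definition tdeg i (p : tot) : tot := pack (gdeg _ i (projT2 p)).
Definition tinv (p : tot) : tot := pack (ginv _ (projT2 p)).
Definition tone n : tot := pack (gone C n).
Definition tface i (p : tot) : tot :=
  let: existT n x := p in
  match n return C n -> tot with
  | 0 => fun x => pack x
  | n'.+1 => fun x => pack (gface n' i x)
  end x.
(* [tmul p q] is the junk value [p] when the degrees differ; [tface] is the identity in
   degree 0. *)
Definition tmul (p q : tot) : tot :=
  match PeanoNat.Nat.eq_dec (dim q) (dim p) with
  | left e => pack (gmul _ (projT2 p) (cast C e (projT2 q)))
  | right _ => p
  end.
Definition tact (p : tot) k : nat := gact (projT2 p) (inord k).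

Lemma tot_ind (P : tot -> Prop) : (forall n (x : C n), P (pack x)) -> forall p, P p.
Proof. by move=> Ppack [n x]; exact: Ppack. Qed.

Lemma pack_inj n : injective (@pack n).
Proof. move=> x y; exact: Eqdep_dec.inj_pair2_eq_dec PeanoNat.Nat.eq_dec _ _ _ _. Qed.

Lemma pack_cast a b (e : a = b) (x : C a) : pack (cast C e x) = pack x.
Proof. by case: b / e. Qed.

Lemma tmul_pack n (x y : C n) : tmul (pack x) (pack y) = pack (gmul n x y).
Proof.
rewrite /tmul /=; case: PeanoNat.Nat.eq_dec => // e.
by rewrite (eq_irrelevance e erefl).
Qed.

Lemma dim_tmul p q : dim (tmul p q) = dim p.
Proof. by rewrite /tmul; case: PeanoNat.Nat.eq_dec. Qed.

Lemma dim_pack n (x : C n) : dim (pack x) = n.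
Proof. by []. Qed.

Lemma dim_tinv p : dim (tinv p) = dim p.
Proof. by []. Qed.

Lemma dim_tsR p : dim (tsR p) = (dim p).+1.
Proof. by []. Qed.

Lemma dim_tdeg i p : dim (tdeg i p) = (dim p).+1.
Proof. by []. Qed.

Lemma dim_tface i p : dim (tface i p) = (dim p).-1.
Proof. by case: p => [[|n] x]. Qed.

Lemma dim_iter_tsL a p : dim (iter a tsL p) = a + dim p.
Proof. by elim: a => //= a IH; rewrite addSn -IH. Qed.

Lemma dim_iter_tsR a p : dim (iter a tsR p) = a + dim p.
Proof. by elim: a => //= a IH; rewrite addSn -IH. Qed.

Lemma tmulA p q r : dim q = dim p -> dim r = dim p ->
  tmul p (tmul q r) = tmul (tmul p q) r.
Proof.
elim/tot_ind: p => n x; elim/tot_ind: q => m y; elim/tot_ind: r => k z /= em ek; subst m k.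
by rewrite !tmul_pack gmulA.
Qed.

Lemma tmul1 p : tmul (tone (dim p)) p = p.
Proof. by elim/tot_ind: p => n x; rewrite tmul_pack gmul1. Qed.

Lemma tmulr1 p : tmul p (tone (dim p)) = p.
Proof. by elim/tot_ind: p => n x; rewrite tmul_pack gmulr1. Qed.

Lemma tmul1E n p : dim p = n -> tmul (tone n) p = p.
Proof. by move=> <-; rewrite tmul1. Qed.

Lemma tmulr1E n p : dim p = n -> tmul p (tone n) = p.
Proof. by move=> <-; rewrite tmulr1. Qed.

Lemma tmulV p : tmul (tinv p) p = tone (dim p).
Proof. by elim/tot_ind: p => n x; rewrite tmul_pack gmulV. Qed.

Lemma tmulVr p : tmul p (tinv p) = tone (dim p).
Proof. by elim/tot_ind: p => n x; rewrite tmul_pack gmulVr. Qed.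

Lemma tinvK : involutive tinv.
Proof. by elim/tot_ind => n x; rewrite /tinv /= ginvK. Qed.

Lemma tinvM p q : dim q = dim p -> tinv (tmul p q) = tmul (tinv q) (tinv p).
Proof.
elim/tot_ind: p => n x; elim/tot_ind: q => m y /= em; subst m.
by rewrite !tmul_pack /tinv /= ginvM.
Qed.

Lemma tinv1 n : tinv (tone n) = tone n.
Proof. by rewrite /tinv /= ginv1. Qed.

Lemma tmulI p q r : dim q = dim p -> dim r = dim p -> tmul p q = tmul p r -> q = r.
Proof.
elim/tot_ind: p => n x; elim/tot_ind: q => m y; elim/tot_ind: r => k z /= em ek; subst m k.
by rewrite !tmul_pack => /pack_inj /gmulI ->.
Qed.

Lemma tinv_uniq p q : dim q = dim p -> tmul p q = tone (dim p) -> q = tinv p.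
Proof. by move=> eq_dim pq1; apply: (@tmulI p) => //; rewrite tmulVr. Qed.

Lemma tact_le p k : tact p k <= dim p.
Proof. by rewrite /tact -ltnS ltn_ord. Qed.

Lemma tactV_le p k : tact (tinv p) k <= dim p.
Proof. exact: tact_le. Qed.

Lemma tactM p q k : dim q = dim p -> tact (tmul p q) k = tact p (tact q k).
Proof.
elim/tot_ind: p => n x; elim/tot_ind: q => m y /= em; subst m.
by rewrite tmul_pack /tact /= gactM inord_val.
Qed.

Lemma tact1 n k : k <= n -> tact (tone n) k = k.
Proof. by move=> le_kn; rewrite /tact /= gact1 inordK. Qed.

Lemma tactVK p k : k <= dim p -> tact (tinv p) (tact p k) = k.
Proof. by elim/tot_ind: p => n x /= le_k; rewrite /tact /= inord_val gactVK inordK. Qed.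

Lemma tactKV p k : k <= dim p -> tact p (tact (tinv p) k) = k.
Proof. by elim/tot_ind: p => n x /= le_k; rewrite /tact /= inord_val gactKV inordK. Qed.

Lemma tactV_neq p i k : i <= dim p -> k <= dim p -> i != k ->
  tact (tinv p) i != tact (tinv p) k.
Proof.
move=> le_i le_k; apply: contra => /eqP eq_ik.
by rewrite -(tactKV le_i) eq_ik tactKV.
Qed.

Lemma tdegM i p q : i <= dim p -> dim q = dim p ->
  tdeg i (tmul p q) = tmul (tdeg i p) (tdeg (tact (tinv p) i) q).
Proof.
elim/tot_ind: p => n x; elim/tot_ind: q => m y /= le_i em; subst m.
by rewrite !tmul_pack /tdeg /= gdeg_mulE.
Qed.

Lemma tfaceM i p q : 0 < dim p -> i <= dim p -> dim q = dim p ->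
  tface i (tmul p q) = tmul (tface i p) (tface (tact (tinv p) i) q).
Proof.
elim/tot_ind: p => [[|n] x] //; elim/tot_ind: q => m y /= _ le_i em; subst m.
by rewrite !tmul_pack /= gface_mulE.
Qed.

Lemma tdeg1 i n : i <= n -> tdeg i (tone n) = tone n.+1.
Proof.
move=> le_in; apply: (@tmulI (tdeg i (tone n))) => //.
by rewrite tmulr1 -{3}(tmul1 (tone n)) tdegM //= tinv1 tact1.
Qed.

Lemma tface1 i n : i <= n.+1 -> tface i (tone n.+1) = tone n.
Proof.
move=> le_i; apply: (@tmulI (tface i (tone n.+1))); rewrite ?dim_tface //.
have idem : tmul (tface i (tone n.+1)) (tface i (tone n.+1)) = tface i (tone n.+1).
  by rewrite -[in RHS](tmul1 (tone n.+1)) tfaceM //= tinv1 tact1.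
by rewrite idem -[LHS](tmulr1 (tface i (tone n.+1))).
Qed.

Lemma tdegV i p : i <= dim p -> tinv (tdeg i p) = tdeg (tact (tinv p) i) (tinv p).
Proof.
by move=> le_i; symmetry; apply: tinv_uniq => //; rewrite -tdegM // tmulVr tdeg1.
Qed.

Lemma tfaceV i p : 0 < dim p -> i <= dim p ->
  tinv (tface i p) = tface (tact (tinv p) i) (tinv p).
Proof.
move=> dim_gt0 le_i; symmetry; apply: tinv_uniq; rewrite ?dim_tface //.
rewrite -tfaceM // tmulVr; move: dim_gt0 le_i; elim/tot_ind: p => [[|n] x] //= _ le_i.
exact: tface1.
Qed.

Lemma tface_face i j p : i < j -> j <= dim p -> 1 < dim p ->
  tface i (tface j p) = tface j.-1 (tface i p).
Proof. by elim/tot_ind: p => [[|[|n]] x] //= lt_ij le_j _; rewrite gface_face. Qed.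

Lemma tface_deg_lt i j p : i < j -> j <= dim p -> 0 < dim p ->
  tface i (tdeg j p) = tdeg j.-1 (tface i p).
Proof. by elim/tot_ind: p => [[|n] x] //= lt_ij le_j _; rewrite /tdeg /= gface_deg_lt. Qed.

Lemma tface_deg j p : j <= dim p -> tface j (tdeg j p) = p.
Proof.
by elim/tot_ind: p => n x /= le_j; rewrite /tdeg /=; case: (gface_deg_eq C n j x le_j) => ->.
Qed.

Lemma tfaceS_deg j p : j <= dim p -> tface j.+1 (tdeg j p) = p.
Proof.
by elim/tot_ind: p => n x /= le_j; rewrite /tdeg /=; case: (gface_deg_eq C n j x le_j) => _ ->.
Qed.

Lemma tface_deg_gt i j p : j.+1 < i -> i <= (dim p).+1 -> 0 < dim p ->
  tface i (tdeg j p) = tdeg j (tface i.-1 p).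
Proof. by elim/tot_ind: p => [[|n] x] //= lt_ji le_i _; rewrite /tdeg /= gface_deg_gt. Qed.

Lemma tdeg_deg i j p : i <= j -> j <= dim p -> tdeg i (tdeg j p) = tdeg j.+1 (tdeg i p).
Proof. by elim/tot_ind: p => n x /= le_ij le_j; rewrite /tdeg /= gdeg_deg. Qed.

(** * Contractions *)

Hypothesis HA : is_ambi_contractible C.

Ltac ambi := case: HA => sLM [sRM [face0_sL [faceS_sL [deg0_sL [degS_sL
  [facet_sR [face_sR [degt_sR [deg_sR [pi_sL pi_sR]]]]]]]]]].

Lemma gsLM n (g h : C n) : gsL (gmul n g h) = gmul n.+1 (gsL g) (gsL h).
Proof. by ambi. Qed.

Lemma gsRM n (g h : C n) : gsR (gmul n g h) = gmul n.+1 (gsR g) (gsR h).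
Proof. by ambi. Qed.

Lemma gpi_sL n (g : C n) : gpi (gsL g) = sL (gpi g).
Proof. by ambi. Qed.

Lemma gpi_sR n (g : C n) : gpi (gsR g) = sR (gpi g).
Proof. by ambi. Qed.

Lemma tsLM p q : dim q = dim p -> tsL (tmul p q) = tmul (tsL p) (tsL q).
Proof.
elim/tot_ind: p => n x; elim/tot_ind: q => m y /= em; subst m.
by rewrite !tmul_pack /tsL /= gsLM.
Qed.

Lemma tsRM p q : dim q = dim p -> tsR (tmul p q) = tmul (tsR p) (tsR q).
Proof.
elim/tot_ind: p => n x; elim/tot_ind: q => m y /= em; subst m.
by rewrite !tmul_pack /tsR /= gsRM.
Qed.

Lemma tsL1 n : tsL (tone n) = tone n.+1.
Proof. by rewrite /tsL /= (gmorph1 (@gsLM n)). Qed.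

Lemma tsR1 n : tsR (tone n) = tone n.+1.
Proof. by rewrite /tsR /= (gmorph1 (@gsRM n)). Qed.

Lemma tsLV p : tsL (tinv p) = tinv (tsL p).
Proof. by elim/tot_ind: p => n x; rewrite /tsL /tinv /= (gmorphV (@gsLM _)). Qed.

Lemma tsRV p : tsR (tinv p) = tinv (tsR p).
Proof. by elim/tot_ind: p => n x; rewrite /tsR /tinv /= (gmorphV (@gsRM _)). Qed.

Lemma tface0_sL p : tface 0 (tsL p) = p.
Proof. by elim/tot_ind: p => n x; ambi; rewrite /tsL /= face0_sL. Qed.

Lemma tfaceS_sL i p : 0 < dim p -> i <= dim p -> tface i.+1 (tsL p) = tsL (tface i p).
Proof. by elim/tot_ind: p => [[|n] x] //= _ le_i; ambi; rewrite /tsL /= faceS_sL. Qed.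

Lemma tdeg0_sL p : tdeg 0 (tsL p) = tsL (tsL p).
Proof. by elim/tot_ind: p => n x; ambi; rewrite /tsL /tdeg /= deg0_sL. Qed.

Lemma tdegS_sL j p : j <= dim p -> tdeg j.+1 (tsL p) = tsL (tdeg j p).
Proof. by elim/tot_ind: p => n x /= le_j; ambi; rewrite /tsL /tdeg /= degS_sL. Qed.

Lemma tface_last_sR p : tface (dim p).+1 (tsR p) = p.
Proof. by elim/tot_ind: p => n x; ambi; rewrite /tsR /= facet_sR. Qed.

Lemma tface_sR i p : 0 < dim p -> i <= dim p -> tface i (tsR p) = tsR (tface i p).
Proof. by elim/tot_ind: p => [[|n] x] //= _ le_i; ambi; rewrite /tsR /= face_sR. Qed.

Lemma tdeg_last_sR p : tdeg (dim p).+1 (tsR p) = tsR (tsR p).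
Proof. by elim/tot_ind: p => n x; ambi; rewrite /tsR /tdeg /= degt_sR. Qed.

Lemma tdeg_sR j p : j <= dim p -> tdeg j (tsR p) = tsR (tdeg j p).
Proof. by elim/tot_ind: p => n x /= le_j; ambi; rewrite /tsR /tdeg /= deg_sR. Qed.

Hypothesis HS : is_symmetric C.

Lemma gpi_surj n (s : Sn n) : exists g : C n, gpi g = s.
Proof. by case: HS => surj _; apply: surj. Qed.

Lemma gpi_face n i (g : C n.+1) : i <= n.+1 -> gpi (gface n i g) = sface i (gpi g).
Proof. by case: HS => _ [pi_face _]; apply: pi_face. Qed.

Lemma gpi_deg n i (g : C n) : i <= n -> gpi (gdeg n i g) = sdeg i (gpi g).
Proof. by case: HS => _ [_ pi_deg]; apply: pi_deg. Qed.

Lemma tact_sL p k : k <= (dim p).+1 ->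
  tact (tsL p) k = if k == 0 then 0 else (tact p k.-1).+1.
Proof.
elim/tot_ind: p => n x /= le_k; rewrite /tact /= -gpiE gpi_sL /sL.
case: k le_k => [|k] le_k.
  have -> : inord 0 = ord0 :> 'I_n.+2 by apply/val_inj; rewrite /= inordK.
  by rewrite lift_perm_id.
have -> : (inord k.+1 : 'I_n.+2) = lift ord0 (inord k : 'I_n.+1).
  by apply/val_inj; rewrite /= !inordK.
by rewrite lift_perm_lift /= gpiE.
Qed.

Lemma tact_sR p k : k <= (dim p).+1 ->
  tact (tsR p) k = if k == (dim p).+1 then k else tact p k.
Proof.
elim/tot_ind: p => n x /= le_k; rewrite /tact /= -gpiE gpi_sR /sR.
case: eqP => [->|ne].
  have -> : inord n.+1 = ord_max :> 'I_n.+2 by apply/val_inj; rewrite /= inordK.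
  by rewrite lift_perm_id.
have -> : (inord k : 'I_n.+2) = lift ord_max (inord k : 'I_n.+1).
  by apply/val_inj; rewrite /= !inordK /bump //; lia.
by rewrite lift_perm_lift /= gpiE /bump leqNgt ltn_ord.
Qed.

Lemma tact_deg i p k : i <= dim p -> k <= (dim p).+1 ->
  tact (tdeg i p) k = if k == (tact (tinv p) i).+1 then i.+1
                      else bump i.+1 (tact p (unbump (tact (tinv p) i).+1 k)).
Proof.
elim/tot_ind: p => n x /= le_i le_k; rewrite /tact /= -gpiE gpi_deg // /sdeg.
set c := gact (ginv n x) (inord i).
have -> : ((gpi x)^-1)%g (inord i) = c by rewrite -gpiV gpiE.
case: eqP => [eq_k | ne].
  have -> : (inord k : 'I_n.+2) = lift ord0 c by apply/val_inj; rewrite /= inordK.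
  by rewrite lift_perm_id /= inordK.
have lt_c := ltn_ord c.
have -> : (inord k : 'I_n.+2) = lift (lift ord0 c) (inord (unbump c.+1 k) : 'I_n.+1).
  by apply/val_inj; rewrite /= !inordK /bump /unbump /=; clearbody c; lia.
by rewrite lift_perm_lift /= gpiE inordK.
Qed.

Lemma tact_face i p k : 0 < dim p -> i <= dim p -> k <= (dim p).-1 ->
  tact (tface i p) k = unbump i (tact p (bump (tact (tinv p) i) k)).
Proof.
elim/tot_ind: p => [[|n] x] //= _ le_i le_k.
rewrite /tact /= -gpiE gpi_face // /sface permE /dfun.
set s := gpi x; set ii : 'I_n.+2 := inord i; set y : 'I_n.+1 := inord k.
have ne : ii != s (lift (s^-1 ii)%g y).
  by apply/eqP => eq_ii; have := neq_lift (s^-1 ii)%g y; rewrite {1}eq_ii permK eqxx.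
case: (unlift_some ne) => j eq_j -> /=.
have eq_c : (s^-1)%g ii = gact (ginv n.+1 x) (inord i) by rewrite /s -gpiV gpiE.
have lift_y : lift (s^-1 ii)%g y = inord (bump (gact (ginv n.+1 x) (inord i)) k) :> 'I_n.+2.
  have lt_c := ltn_ord (gact (ginv n.+1 x) (inord i)).
  by apply/val_inj; rewrite /= eq_c /y !inordK /bump //; lia.
move: eq_j; rewrite lift_y /s gpiE => eq_j.
by have := congr1 val eq_j; rewrite /= /ii inordK // => ->; rewrite bumpK.
Qed.

(** * Blocks and iterated degeneracies *)

Definition tblk n i b := iter i tsL (iter (n - i) tsR b).
Definition tdegs i m a := iter m (tdeg i) a.
Definition tocomp a b i := tmul (tblk (dim a) i b) (tdegs i (dim b) a).

Lemma dim_tdegs i m a : dim (tdegs i m a) = m + dim a.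
Proof. by elim: m => //= m IH; rewrite addSn -IH. Qed.

Lemma tdegsS i m a : tdegs i m.+1 a = tdeg i (tdegs i m a).
Proof. by []. Qed.

Lemma dim_tblk n i b : i <= n -> dim (tblk n i b) = n + dim b.
Proof. by move=> le_in; rewrite /tblk dim_iter_tsL dim_iter_tsR; lia. Qed.

Lemma dim_tocomp a b i : i <= dim a -> dim (tocomp a b i) = dim a + dim b.
Proof. by move=> le_i; rewrite /tocomp dim_tmul dim_tblk. Qed.

Lemma iter_tsLM k p q : dim q = dim p ->
  iter k tsL (tmul p q) = tmul (iter k tsL p) (iter k tsL q).
Proof. by move=> eq_dim; elim: k => //= k ->; rewrite tsLM // !dim_iter_tsL eq_dim. Qed.

Lemma iter_tsRM k p q : dim q = dim p ->
  iter k tsR (tmul p q) = tmul (iter k tsR p) (iter k tsR q).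
Proof. by move=> eq_dim; elim: k => //= k ->; rewrite tsRM // !dim_iter_tsR eq_dim. Qed.

Lemma iter_tsL1 k n : iter k tsL (tone n) = tone (k + n).
Proof. by elim: k => //= k ->; rewrite tsL1. Qed.

Lemma iter_tsR1 k n : iter k tsR (tone n) = tone (k + n).
Proof. by elim: k => //= k ->; rewrite tsR1. Qed.

Lemma iter_tsLV k p : iter k tsL (tinv p) = tinv (iter k tsL p).
Proof. by elim: k => //= k ->; rewrite tsLV. Qed.

Lemma iter_tsRV k p : iter k tsR (tinv p) = tinv (iter k tsR p).
Proof. by elim: k => //= k ->; rewrite tsRV. Qed.

Lemma tblkM n i p q : dim q = dim p -> tblk n i (tmul p q) = tmul (tblk n i p) (tblk n i q).
Proof. by move=> eq_dim; rewrite /tblk iter_tsRM // iter_tsLM // !dim_iter_tsR eq_dim. Qed.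

Lemma tblk1 n i m : i <= n -> tblk n i (tone m) = tone (n + m).
Proof. by move=> le_in; rewrite /tblk iter_tsR1 iter_tsL1; congr tone; lia. Qed.

Lemma tblkV n i p : tblk n i (tinv p) = tinv (tblk n i p).
Proof. by rewrite /tblk iter_tsRV iter_tsLV. Qed.

Lemma tact_iter_tsL a p x : x <= a + dim p ->
  tact (iter a tsL p) x = if x < a then x else a + tact p (x - a).
Proof.
elim: a x => [|a IH] x le_x /=; first by rewrite subn0.
rewrite tact_sL ?dim_iter_tsL //; case: x le_x => [|x] le_x //=.
by rewrite IH; [case: ifP => lt_x; rewrite ltnS lt_x | lia].
Qed.

Lemma tact_iter_tsR a p x : x <= a + dim p ->
  tact (iter a tsR p) x = if x <= dim p then tact p x else x.
Proof.
elim: a x => [|a IH] x le_x /=; first by rewrite le_x.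
rewrite tact_sR ?dim_iter_tsR //; case: eqP => [->|ne]; first by case: ifP; lia.
by rewrite IH //; lia.
Qed.

Lemma tact_tblk_in n i b j : i <= n -> j <= dim b ->
  tact (tblk n i b) (i + j) = i + tact b j.
Proof.
move=> le_in le_j; rewrite /tblk tact_iter_tsL ?dim_iter_tsR; last by lia.
by rewrite ltnNge leq_addr /= addKn tact_iter_tsR ?le_j //; lia.
Qed.

Lemma tact_tblk_out n i b y : i <= n -> y <= n + dim b -> (y < i) || (i + dim b < y) ->
  tact (tblk n i b) y = y.
Proof.
move=> le_in le_y out_y; rewrite /tblk tact_iter_tsL ?dim_iter_tsR; last by lia.
by case: ifP => // ge_y; rewrite tact_iter_tsR; [case: ifP; lia | lia].
Qed.

Lemma tactV_tblk_in n i b j : i <= n -> j <= dim b ->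
  tact (tinv (tblk n i b)) (i + j) = i + tact (tinv b) j.
Proof. by move=> le_in le_j; rewrite -tblkV tact_tblk_in. Qed.

Lemma tactV_tblk_out n i b y : i <= n -> y <= n + dim b -> (y < i) || (i + dim b < y) ->
  tact (tinv (tblk n i b)) y = y.
Proof. by move=> le_in le_y out_y; rewrite -tblkV tact_tblk_out. Qed.

(* [bumpn h m] makes room for [m] new positions at [h]; [bump h] is [bumpn h 1]. *)
Definition bumpn h m v := if v < h then v else v + m.

Ltac bump_lia :=
  rewrite ?/bumpn ?/bump ?/unbump;
  repeat match goal with |- context [if ?b then _ else _] => case: (boolP b) => ? end;
  lia.

Lemma tact_tdegs_in i m a j : i <= dim a -> j <= m ->
  tact (tdegs i m a) (tact (tinv a) i + j) = i + j.
Proof.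
move=> le_i; have le_c := tactV_le a i; set c := tact (tinv a) i in le_c *.
elim: m j => [|m IH] j le_jm.
  by move: le_jm; rewrite leqn0 => /eqP ->; rewrite !addn0 tactKV.
have act_c : tact (tdegs i m a) c = i by rewrite -[c]addn0 IH ?addn0.
have actV_i : tact (tinv (tdegs i m a)) i = c.
  by have := @tactVK (tdegs i m a) c; rewrite act_c dim_tdegs; apply; lia.
rewrite tdegsS tact_deg ?dim_tdegs ?actV_i; try lia.
case: j le_jm => [|[|j]] le_jm.
- rewrite addn0 ifN_eqC; last by lia.
  have -> : unbump c.+1 c = c by bump_lia.
  by rewrite act_c; bump_lia.
- by rewrite addn1 eqxx addn1.
- rewrite ifN_eqC; last by lia.
  have -> : unbump c.+1 (c + j.+2) = c + j.+1 by bump_lia.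
  by rewrite IH; [bump_lia | lia].
Qed.

Lemma tactV_tdegs i m a : i <= dim a -> tact (tinv (tdegs i m a)) i = tact (tinv a) i.
Proof.
move=> le_i; have := @tact_tdegs_in i m a 0 le_i (leq0n m); rewrite !addn0 => act_c.
by have := @tactVK (tdegs i m a) (tact (tinv a) i); rewrite act_c; apply;
  rewrite dim_tdegs; have := tactV_le a i; lia.
Qed.

Lemma tact_tdegs_out i m a y : i <= dim a -> y <= dim a -> y != tact (tinv a) i ->
  tact (tdegs i m a) (bumpn (tact (tinv a) i) m y) = bumpn i m (tact a y).
Proof.
move=> le_i le_y; have le_c := tactV_le a i; set c := tact (tinv a) i in le_c *.
move=> ne_yc; have ne_ay : tact a y != i.
  by apply: contra ne_yc => /eqP eq_ay; rewrite /c -eq_ay tactVK.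
have le_ay := tact_le a y.
elim: m => [|m IH]; first by rewrite /bumpn /= !addn0 !if_same.
rewrite tdegsS tact_deg ?dim_tdegs ?tactV_tdegs -/c; [ | done | lia | bump_lia].
rewrite ifN; last by move: ne_yc; bump_lia.
have -> : unbump c.+1 (bumpn c m.+1 y) = bumpn c m y by move: ne_yc; bump_lia.
by rewrite IH; move: ne_ay; bump_lia.
Qed.

Lemma tdegsV i m a : i <= dim a -> tinv (tdegs i m a) = tdegs (tact (tinv a) i) m (tinv a).
Proof.
move=> le_i; elim: m => [|m IH] //.
by rewrite !tdegsS tdegV ?dim_tdegs ?tactV_tdegs ?IH //; lia.
Qed.

Lemma tdegsM i m p q : i <= dim p -> dim q = dim p ->
  tdegs i m (tmul p q) = tmul (tdegs i m p) (tdegs (tact (tinv p) i) m q).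
Proof.
move=> le_i eq_dim; elim: m => [|m IH] //.
by rewrite !tdegsS IH tdegM ?dim_tdegs ?eq_dim ?tactV_tdegs //; lia.
Qed.

Lemma tdegs1 i m n : i <= n -> tdegs i m (tone n) = tone (m + n).
Proof. by move=> le_in; elim: m => [|m IH] //; rewrite tdegsS IH tdeg1 //; lia. Qed.

Lemma tactV_tocomp_in a b i j : i <= dim a -> j <= dim b ->
  tact (tinv (tocomp a b i)) (i + j) = tact (tinv a) i + tact (tinv b) j.
Proof.
move=> le_i le_j; rewrite /tocomp tinvM; last by rewrite dim_tblk // dim_tdegs addnC.
rewrite tactM; last by rewrite dim_tinv dim_tblk // dim_tinv dim_tdegs addnC.
rewrite tactV_tblk_in // tdegsV //.
have := @tact_tdegs_in (tact (tinv a) i) (dim b) (tinv a) (tact (tinv b) j).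
by rewrite tinvK tactKV // => ->; [|exact: tactV_le| exact: tactV_le].
Qed.

Lemma tactV_tocomp_out a b i y : i <= dim a -> y <= dim a -> y != i ->
  tact (tinv (tocomp a b i)) (bumpn i (dim b) y) =
  bumpn (tact (tinv a) i) (dim b) (tact (tinv a) y).
Proof.
move=> le_i le_y ne_yi; rewrite /tocomp tinvM; last by rewrite dim_tblk // dim_tdegs addnC.
rewrite tactM; last by rewrite dim_tinv dim_tblk // dim_tinv dim_tdegs addnC.
rewrite tactV_tblk_out //; [ | by move: ne_yi; bump_lia ..].
rewrite tdegsV //.
have := @tact_tdegs_out (tact (tinv a) i) (dim b) (tinv a) y.
by rewrite tinvK tactKV // => ->; [|exact: tactV_le| done|].
Qed.

Lemma pack_iter_sL a n (x : C n) : pack (iterL (@gsL C) a x) = iter a tsL (pack x).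
Proof. by elim: a => //= a IH; rewrite -IH. Qed.

Lemma pack_iter_sR a n (x : C n) : pack (iterL (@gsR C) a x) = iter a tsR (pack x).
Proof. by elim: a => //= a IH; rewrite -IH. Qed.

Lemma pack_iter_deg i a n (x : C n) : pack (Defs.iterD (@gdeg C) i a x) = tdegs i a (pack x).
Proof. by elim: a => //= a IH; rewrite -IH. Qed.

Lemma pack_gocomp n m (a : C n) (b : C m) (i : 'I_n.+1) :
  pack (gocomp a b i) = tocomp (pack a) (pack b) i.
Proof.
by rewrite /gocomp /ocomp -tmul_pack /blk !pack_cast pack_iter_deg pack_iter_sL pack_iter_sR.
Qed.

Hypothesis HO : is_operadic C.
Hypothesis HM : is_monoidal C.

Lemma tocomp_operadic a b i : i <= dim a ->
  tocomp a b i = tmul (tdegs i (dim b) a) (tblk (dim a) (tact (tinv a) i) b).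
Proof.
elim/tot_ind: a => n a; elim/tot_ind: b => m b /= le_i.
have := congr1 (@pack _) (HO a b (inord i)).
rewrite -!tmul_pack /gblk /gdegit /blk !pack_cast.
by rewrite !pack_iter_sL !pack_iter_sR pack_iter_deg inordK.
Qed.

Lemma iter_tsR_tsL_commute a b :
  tmul (iter (dim b).+1 tsR a) (iter (dim a).+1 tsL b) =
  tmul (iter (dim a).+1 tsL b) (iter (dim b).+1 tsR a).
Proof.
elim/tot_ind: a => n a; elim/tot_ind: b => m b.
have gmonE (x : C n) (y : C m) :
  pack (gmon x y) = tmul (iter m.+1 tsR (pack x)) (iter n.+1 tsL (pack y)).
  by rewrite /gmon -tmul_pack pack_cast pack_iter_sR; congr tmul; exact: (pack_iter_sL n.+1 y).
have gmon_a1 : pack (gmon a (gone C m)) = iter m.+1 tsR (pack a).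
  by rewrite gmonE iter_tsL1 tmulr1E // dim_iter_tsR /= addSn addnC.
have gmon_1b : pack (gmon (gone C n) b) = iter n.+1 tsL (pack b).
  by rewrite gmonE iter_tsR1 tmul1E // dim_iter_tsL /= addSn addnC.
rewrite -gmon_a1 -gmon_1b !tmul_pack -HM -HM.
by rewrite gmul1 gmulr1 gmul1 gmulr1.
Qed.

Lemma tdegs_sR j m p : j <= dim p -> tdegs j m (tsR p) = tsR (tdegs j m p).
Proof.
by move=> le_j; elim: m => [|m IH] //; rewrite !tdegsS IH tdeg_sR // dim_tdegs; lia.
Qed.

Lemma tmul_conjE p q r : dim q = dim p -> dim r = dim p ->
  tmul r p = tmul p q -> q = tmul (tinv p) (tmul r p).
Proof. by move=> eq_q eq_r ->; rewrite tmulA ?dim_tinv // tmulV -eq_q tmul1. Qed.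

(* With [t := s_0^m(x)] for a lift [x] of the transposition of [S_1], operadicity gives
   [tsL p = t^-1 (tsR p) t] and [tsL (tsR p) = (tsR t)^-1 (tsR (tsR p)) (tsR t)]; apply
   [tsR] to the first. *)
Lemma tsR_tsL p : tsR (tsL p) = tsL (tsR p).
Proof.
have [x pi_x] := gpi_surj (tperm ord0 ord_max : Sn 1).
have actV_x : tact (tinv (pack x)) 0 = 1.
  rewrite /tact /= -gpiE gpiV pi_x tpermV.
  have -> : (inord 0 : 'I_2) = ord0 by apply/val_inj; rewrite /= inordK.
  by rewrite tpermL.
have actV_sRx : tact (tinv (tsR (pack x))) 0 = 1 by rewrite -tsRV tact_sR.
set t := tdegs 0 (dim p) (pack x).
have dim_t : dim t = (dim p).+1 by rewrite dim_tdegs addn1.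
have conj_sL := @tocomp_operadic (pack x) p 0 (leq0n _).
rewrite actV_x /tocomp /tblk /= -/t in conj_sL.
have conj_sLsR := @tocomp_operadic (tsR (pack x)) p 0 (leq0n _).
rewrite actV_sRx /tocomp /tblk /= tdegs_sR // -/t in conj_sLsR.
rewrite (tmul_conjE _ _ conj_sL) // (tmul_conjE _ _ conj_sLsR) ?dim_tsR ?dim_t //.
by rewrite tsRM ?tsRM ?tsRV // ?dim_tmul ?dim_tinv ?dim_tsR ?dim_t.
Qed.

Lemma iter_tsR_tsL a b p : iter a tsR (iter b tsL p) = iter b tsL (iter a tsR p).
Proof.
have iter_tsR_sL q : iter a tsR (tsL q) = tsL (iter a tsR q).
  by elim: a => //= a ->; rewrite tsR_tsL.
by elim: b => //= b <-; rewrite iter_tsR_sL.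
Qed.

Lemma tblk_tblk n m i j p : i <= n -> j <= m ->
  tblk n i (tblk m j p) = tblk (n + m) (i + j) p.
Proof.
move=> le_in le_jm; rewrite /tblk iter_tsR_tsL -iterD addnC -iterD.
by congr (iter _ tsL (iter _ tsR p)); lia.
Qed.

Lemma tdeg_iter_tsL a q p : q <= dim p -> tdeg (a + q) (iter a tsL p) = iter a tsL (tdeg q p).
Proof.
move=> le_q; elim: a => //= a IH.
by rewrite addSn tdegS_sL ?IH // dim_iter_tsL; lia.
Qed.

Lemma tdeg_iter_tsR a q p : q <= dim p -> tdeg q (iter a tsR p) = iter a tsR (tdeg q p).
Proof.
move=> le_q; elim: a => //= a IH.
by rewrite tdeg_sR ?IH // dim_iter_tsR; lia.
Qed.

Lemma tdeg_iter_tsR_high r q p : dim p < q -> q <= r + dim p ->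
  tdeg q (iter r tsR p) = iter r.+1 tsR p.
Proof.
elim: r => [|r IH] lt_q le_q /=; first by lia.
case: (eqVneq q (dim (iter r tsR p)).+1) => [->|ne]; first by rewrite tdeg_last_sR.
move: ne; rewrite dim_iter_tsR => ne.
by rewrite tdeg_sR ?dim_iter_tsR ?IH //; lia.
Qed.

Lemma tdeg_iter_tsL_low a k p : k < a -> tdeg k (iter a tsL p) = iter a.+1 tsL p.
Proof.
elim: a k => [|a IH] [|k] lt_k //=; first by rewrite tdeg0_sL.
by rewrite tdegS_sL ?IH // dim_iter_tsL; lia.
Qed.

Lemma tdeg_tblk_in n i k b : i <= n -> i <= k -> k <= i + dim b ->
  tdeg k (tblk n i b) = tblk n i (tdeg (k - i) b).
Proof.
move=> le_in le_ik le_k; rewrite /tblk -{1}(subnKC le_ik).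
by rewrite tdeg_iter_tsL ?dim_iter_tsR ?tdeg_iter_tsR //; lia.
Qed.

Lemma tdeg_tblk_gt n i k b : i <= n -> i + dim b < k -> k <= n + dim b ->
  tdeg k (tblk n i b) = tblk n.+1 i b.
Proof.
move=> le_in lt_k le_k; rewrite /tblk -{1}(subnKC (_ : i <= k)); last by lia.
rewrite tdeg_iter_tsL ?dim_iter_tsR; last by lia.
by rewrite tdeg_iter_tsR_high ?subSn //; lia.
Qed.

Lemma tdeg_tblk_lt n i k b : k < i -> tdeg k (tblk n i b) = tblk n.+1 i.+1 b.
Proof. by move=> lt_ki; rewrite /tblk tdeg_iter_tsL_low. Qed.

Lemma tdegs_tblk_in n i k p b : i <= n -> i <= k -> k <= i + dim b ->
  tdegs k p (tblk n i b) = tblk n i (tdegs (k - i) p b).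
Proof.
move=> le_in le_ik le_k; elim: p => [|p IH] //.
by rewrite !tdegsS IH tdeg_tblk_in // dim_tdegs; lia.
Qed.

Lemma tdegs_tblk_gt n i k p b : i <= n -> i + dim b < k -> k <= n + dim b ->
  tdegs k p (tblk n i b) = tblk (n + p) i b.
Proof.
move=> le_in lt_k le_k; elim: p => [|p IH]; first by rewrite addn0.
by rewrite tdegsS IH tdeg_tblk_gt ?addnS //; lia.
Qed.

Lemma tdegs_tblk_lt n i k p b : k < i -> tdegs k p (tblk n i b) = tblk (n + p) (i + p) b.
Proof.
move=> lt_ki; elim: p => [|p IH]; first by rewrite !addn0.
by rewrite tdegsS IH tdeg_tblk_lt ?addnS //; lia.
Qed.

Lemma tdeg_tdegs_in i k m a : i <= dim a -> k <= m ->
  tdeg (i + k) (tdegs i m a) = tdegs i m.+1 a.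
Proof.
move=> le_i; elim: m k => [|m IH] [|k] le_km //; rewrite ?addn0 //.
by rewrite tdegsS addnS -tdeg_deg ?dim_tdegs ?IH //; lia.
Qed.

Lemma tdegs_tdegs_in i k m p a : i <= dim a -> k <= m ->
  tdegs (i + k) p (tdegs i m a) = tdegs i (m + p) a.
Proof.
move=> le_i le_km; elim: p => [|p IH]; first by rewrite addn0.
by rewrite tdegsS IH addnS tdeg_tdegs_in //; lia.
Qed.

Lemma tdeg_tdegs_gt i k m a : i < k -> k <= dim a ->
  tdeg (k + m) (tdegs i m a) = tdegs i m (tdeg k a).
Proof.
move=> lt_ik le_k; elim: m => [|m IH]; first by rewrite addn0.
by rewrite !tdegsS addnS -tdeg_deg ?dim_tdegs ?IH //; lia.
Qed.

Lemma tdegs_tdegs_gt i k m p a : i < k -> k <= dim a ->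
  tdegs (k + m) p (tdegs i m a) = tdegs i m (tdegs k p a).
Proof.
move=> lt_ik le_k; elim: p => [|p IH] //.
by rewrite !tdegsS IH tdeg_tdegs_gt // dim_tdegs; lia.
Qed.

Lemma tface_tdegs_in i j m a : i <= dim a -> j <= m.+1 ->
  tface (i + j) (tdegs i m.+1 a) = tdegs i m a.
Proof.
move=> le_i; elim: m j => [|m IH] j le_j; rewrite tdegsS.
  by case: j le_j => [|[|j]] le_j //; rewrite ?addn0 ?addn1 ?tface_deg ?tfaceS_deg.
case: j le_j => [|[|j]] le_j.
- by rewrite addn0 tface_deg // dim_tdegs; lia.
- by rewrite addn1 tfaceS_deg // dim_tdegs; lia.
rewrite tface_deg_gt ?dim_tdeg ?dim_tdegs; try lia.
by rewrite (_ : (i + j.+2).-1 = i + j.+1) ?IH //; lia.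
Qed.

Lemma tface_tdegs_lt q k m a : q < k -> k <= dim a ->
  tface q (tdegs k m a) = tdegs k.-1 m (tface q a).
Proof.
move=> lt_qk le_k; elim: m => [|m IH] //.
by rewrite !tdegsS tface_deg_lt ?dim_tdegs ?IH //; lia.
Qed.

Lemma tface_tdegs_gt q k m a : k < q -> q <= dim a ->
  tface (q + m) (tdegs k m a) = tdegs k m (tface q a).
Proof.
move=> lt_kq le_q; elim: m => [|m IH]; first by rewrite addn0.
by rewrite !tdegsS addnS tface_deg_gt ?dim_tdegs ?IH //; lia.
Qed.

Lemma tface_iter_tsL a q p : 0 < dim p -> q <= dim p ->
  tface (a + q) (iter a tsL p) = iter a tsL (tface q p).
Proof.
move=> dim_gt0 le_q; elim: a => // a IH.
by rewrite !iterS addSn tfaceS_sL ?IH // dim_iter_tsL; lia.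
Qed.

Lemma tface_iter_tsR a q p : 0 < dim p -> q <= dim p ->
  tface q (iter a tsR p) = iter a tsR (tface q p).
Proof.
move=> dim_gt0 le_q; elim: a => // a IH.
by rewrite !iterS tface_sR ?IH // dim_iter_tsR; lia.
Qed.

Lemma tface_iter_tsR_high r q p : dim p < q -> q <= r + dim p ->
  tface q (iter r tsR p) = iter r.-1 tsR p.
Proof.
elim: r => [|r IH] lt_q le_q; first by lia.
rewrite iterS; case: (eqVneq q (dim (iter r tsR p)).+1) => [->|ne].
  by rewrite tface_last_sR.
move: ne; rewrite dim_iter_tsR => ne.
rewrite tface_sR ?dim_iter_tsR ?IH; try lia.
by case: r {IH} le_q ne => [|r] le_q ne; [lia | rewrite iterS].
Qed.

Lemma tface_iter_tsL_low a q p : q < a -> tface q (iter a tsL p) = iter a.-1 tsL p.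
Proof.
elim: a q => [|a IH] [|q] lt_q //; rewrite iterS ?tface0_sL //.
rewrite tfaceS_sL ?dim_iter_tsL ?IH; try lia.
by case: a {IH} lt_q => [|a] lt_q; [lia | rewrite iterS].
Qed.

Lemma tface_tblk_in n i j b : i <= n -> 0 < dim b -> j <= dim b ->
  tface (i + j) (tblk n i b) = tblk n i (tface j b).
Proof.
move=> le_in dim_gt0 le_j.
by rewrite /tblk tface_iter_tsL ?dim_iter_tsR ?tface_iter_tsR //; lia.
Qed.

Lemma tface_tblk_lt n i q b : q < i -> i <= n.+1 -> tface q (tblk n.+1 i b) = tblk n i.-1 b.
Proof.
move=> lt_qi le_i; rewrite /tblk tface_iter_tsL_low //.
by congr (iter _ tsL (iter _ tsR b)); lia.
Qed.

Lemma tface_tblk_gt n i q b : i <= n.+1 -> i + dim b < q -> q <= n.+1 + dim b ->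
  tface q (tblk n.+1 i b) = tblk n i b.
Proof.
move=> le_i lt_q le_q; rewrite /tblk -{1}(subnKC (_ : i <= q)); last by lia.
rewrite tface_iter_tsL ?dim_iter_tsR ?tface_iter_tsR_high; try lia.
by congr (iter _ tsL (iter _ tsR b)); lia.
Qed.

(** * The set-operad composition *)

Lemma tone0_tocomp b : tocomp (tone 0) b 0 = b.
Proof. by rewrite /tocomp tdegs1 // tmulr1E // addn0. Qed.

Lemma tocomp_tone0 a i : i <= dim a -> tocomp a (tone 0) i = a.
Proof. by move=> le_i; rewrite /tocomp tblk1 // tmul1E // addn0. Qed.

Lemma tocomp1 n m k : k <= n -> tocomp (tone n) (tone m) k = tone (n + m).
Proof. by move=> le_kn; rewrite /tocomp tblk1 // tdegs1 // tmulr1E // addnC. Qed.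

Lemma tocompA a b c i j : i <= dim a -> j <= dim b ->
  tocomp a (tocomp b c j) i = tocomp (tocomp a b i) c (i + j).
Proof.
move=> le_i le_j; rewrite /tocomp !dim_tmul !dim_tblk //.
have le_bj := tactV_le b j.
rewrite tdegsM ?dim_tblk ?dim_tdegs; try lia.
rewrite tactV_tblk_in // tdegs_tdegs_in // tdegs_tblk_in; try lia.
rewrite tblkM ?dim_tblk ?dim_tdegs; try lia.
rewrite tblk_tblk // (_ : i + j - i = j); last by lia.
by rewrite tmulA ?dim_tblk ?dim_tdegs ?dim_tmul ?(addnC (dim c)); try lia.
Qed.

(* Both blocks are [tsL]-shifts of the two factors of a monoidal product. *)
Lemma tblk_commute n i k b c : i < k -> k <= n ->
  tmul (tblk (n + dim c) i b) (tblk (n + dim b) (k + dim b) c) =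
  tmul (tblk (n + dim b) (k + dim b) c) (tblk (n + dim c) i b).
Proof.
move=> lt_ik le_kn.
set c' := iter (k - i - 1) tsL (iter (n - k) tsR c).
have dim_c' : dim c' = k - i - 1 + (n - k + dim c) by rewrite dim_iter_tsL dim_iter_tsR.
have -> : tblk (n + dim b) (k + dim b) c = iter i tsL (iter (dim b).+1 tsL c').
  by rewrite /tblk /c' -!iterD; congr (iter _ tsL (iter _ tsR c)); lia.
have -> : tblk (n + dim c) i b = iter i tsL (iter (dim c').+1 tsR b).
  by rewrite /tblk; congr (iter _ tsL (iter _ tsR b)); lia.
rewrite -!iter_tsLM ?iter_tsR_tsL_commute // dim_iter_tsL dim_iter_tsR; lia.
Qed.

Lemma tocompAC a b c i k : i < k -> k <= dim a ->
  tocomp (tocomp a b i) c (k + dim b) = tocomp (tocomp a c k) b i.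
Proof.
move=> lt_ik le_k; rewrite /tocomp !dim_tmul !dim_tblk; try lia.
rewrite tdegsM ?dim_tblk ?dim_tdegs; try lia.
rewrite tactV_tblk_out ?tdegs_tblk_gt ?tdegs_tdegs_gt //; try lia.
rewrite tdegsM ?dim_tblk ?dim_tdegs; try lia.
rewrite tactV_tblk_out ?tdegs_tblk_lt //; try lia.
by rewrite !tmulA ?dim_tblk ?dim_tdegs ?tblk_commute //; lia.
Qed.

Lemma tface_tocomp_in a b i j : i <= dim a -> 0 < dim b -> j <= dim b ->
  tface (i + j) (tocomp a b i) = tocomp a (tface j b) i.
Proof.
move=> le_i dim_gt0 le_j; rewrite /tocomp dim_tface.
have le_bj := tactV_le b j.
have [m dim_b] : exists m, dim b = m.+1 by case: (dim b) dim_gt0 => // m; exists m.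
rewrite dim_b /= tfaceM ?dim_tblk ?dim_tdegs; try lia.
rewrite tactV_tblk_in ?tface_tdegs_in ?tface_tblk_in //; try lia.
by rewrite dim_tdeg dim_tdegs; lia.
Qed.

Lemma tface_tocomp_lt a b q k : q < k -> k <= dim a ->
  tface q (tocomp a b k) = tocomp (tface q a) b k.-1.
Proof.
move=> lt_qk le_k; rewrite /tocomp dim_tface.
rewrite tfaceM ?dim_tblk ?dim_tdegs; try lia.
rewrite tactV_tblk_out ?tface_tdegs_lt //; try lia.
by case: (dim a) le_k => [|n] le_k; [lia | rewrite tface_tblk_lt].
Qed.

Lemma tface_tocomp_gt a b q k : k < q -> q <= dim a ->
  tface (q + dim b) (tocomp a b k) = tocomp (tface q a) b k.
Proof.
move=> lt_kq le_q; rewrite /tocomp dim_tface.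
rewrite tfaceM ?dim_tblk ?dim_tdegs; try lia.
rewrite tactV_tblk_out ?tface_tdegs_gt //; try lia.
by case: (dim a) le_q => [|n] le_q; [lia | rewrite tface_tblk_gt //; lia].
Qed.

(* Operadicity moves [tblk _ k g'] past [tdegs k _ f], which turns [k] into [f^-1(k)]. *)
Lemma tocompM f f' g g' k : dim f' = dim f -> dim g' = dim g -> k <= dim f ->
  tocomp (tmul f f') (tmul g g') k = tmul (tocomp f g k) (tocomp f' g' (tact (tinv f) k)).
Proof.
move=> eq_f eq_g le_k; rewrite /tocomp !dim_tmul eq_f eq_g.
have le_fk := tactV_le f k.
rewrite tblkM // tdegsM //.
have swap := tocomp_operadic g' le_k; rewrite /tocomp eq_g in swap.
rewrite -!tmulA ?dim_tmul ?dim_tblk ?dim_tdegs ?eq_f ?eq_g; try lia.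
congr (tmul _ _).
rewrite (@tmulA (tblk (dim f) k g')) ?dim_tblk ?dim_tdegs ?eq_f ?eq_g; try lia.
by rewrite swap -tmulA ?dim_tblk ?dim_tdegs ?eq_f ?eq_g //; lia.
Qed.

Lemma tactV_face j p y : 0 < dim p -> j <= dim p -> y <= (dim p).-1 ->
  tact (tinv (tface j p)) y = unbump (tact (tinv p) j) (tact (tinv p) (bump j y)).
Proof.
move=> dim_gt0 le_j le_y.
by rewrite tfaceV // tact_face ?dim_tinv ?tactV_le // tinvK tactKV.
Qed.

Lemma tactV_face_lt p i j : i < j -> j <= dim p ->
  tact (tinv (tface j p)) i = unbump (tact (tinv p) j) (tact (tinv p) i).
Proof.
move=> lt_ij le_j; rewrite tactV_face; try lia.
by have -> : bump j i = i by rewrite /bump; lia.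
Qed.

Lemma tactV_face_gt p i k : i < k -> k <= dim p ->
  tact (tinv (tface i p)) k.-1 = unbump (tact (tinv p) i) (tact (tinv p) k).
Proof.
move=> lt_ik le_k; rewrite tactV_face; try lia.
by have -> : bump i k.-1 = k by rewrite /bump; lia.
Qed.

Lemma tactV_tocomp_lt a b i y : y < i -> i <= dim a ->
  tact (tinv (tocomp a b i)) y = bumpn (tact (tinv a) i) (dim b) (tact (tinv a) y).
Proof.
move=> lt_yi le_i; rewrite -tactV_tocomp_out //; try lia.
by rewrite /bumpn lt_yi.
Qed.

Lemma tactV_tocomp_gt a b i y : i < y -> y <= dim a ->
  tact (tinv (tocomp a b i)) (y + dim b) = bumpn (tact (tinv a) i) (dim b) (tact (tinv a) y).
Proof.
move=> lt_iy le_y; rewrite -tactV_tocomp_out //; try lia.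
by rewrite /bumpn ltnNge (ltnW lt_iy).
Qed.

Lemma tocompAC_bumpn a b c u v : u != v -> u <= dim a -> v <= dim a ->
  tocomp (tocomp a b u) c (bumpn u (dim b) v) = tocomp (tocomp a c v) b (bumpn v (dim c) u).
Proof.
move=> ne_uv le_u le_v; rewrite /bumpn.
case: (ltngtP u v) => [lt_uv | lt_vu | eq_uv]; last by rewrite eq_uv eqxx in ne_uv.
- exact: tocompAC.
- by rewrite tocompAC.
Qed.

Lemma tface_tocomp_out a b m q k : dim b = m -> q != k -> q <= dim a -> k <= dim a ->
  tface (bumpn k m q) (tocomp a b k) = tocomp (tface q a) b (unbump q k).
Proof.
move=> <- ne_qk le_q le_k; rewrite /bumpn /unbump.
case: (ltngtP q k) => [lt_qk | lt_kq | eq_qk]; last by rewrite eq_qk eqxx in ne_qk.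
- by rewrite subn1 tface_tocomp_lt.
- by rewrite subn0 tface_tocomp_gt.
Qed.

Lemma tface_face_unbump p u v : u != v -> u <= dim p -> v <= dim p -> 1 < dim p ->
  tface (unbump v u) (tface v p) = tface (unbump u v) (tface u p).
Proof.
move=> ne_uv le_u le_v dim_gt1; rewrite /unbump.
case: (ltngtP u v) => [lt_uv | lt_vu | eq_uv]; last by rewrite eq_uv eqxx in ne_uv.
- by rewrite subn0 subn1 tface_face.
- by rewrite subn0 subn1 [RHS]tface_face.
Qed.

(** * The action groupoids *)

Lemma gpi_iter_sL a n (x : C n) : gpi (iterL (@gsL C) a x) = iterL sL a (gpi x).
Proof. by elim: a => //= a IH; rewrite gpi_sL IH. Qed.

Lemma gpi_iter_sR a n (x : C n) : gpi (iterL (@gsR C) a x) = iterL sR a (gpi x).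
Proof. by elim: a => //= a IH; rewrite gpi_sR IH. Qed.

Lemma gpi_iter_deg i a n (x : C n) : i <= n ->
  gpi (Defs.iterD (@gdeg C) i a x) = Defs.iterD sdeg i a (gpi x).
Proof.
move=> le_i; elim: a => //= a IH.
by rewrite gpi_deg ?IH //; exact: leq_trans le_i (leq_addl a n).
Qed.

Lemma gpi_cast a b (e : a = b) (x : C a) : gpi (cast C e x) = cast Sn e (gpi x).
Proof. by case: b / e. Qed.

Lemma socomp_gpi n m (a : C n) (b : C m) (i : 'I_n.+1) :
  socomp (gpi a) (gpi b) i = gpi (gocomp a b i).
Proof.
rewrite /socomp /gocomp /ocomp gpiM /blk !gpi_cast.
by rewrite gpi_iter_sL gpi_iter_sR gpi_iter_deg // -ltnS.
Qed.

Lemma gpiVE n (a : C n) : ((gpi a)^-1)%g =1 gact (ginv n a).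
Proof. by move=> x; rewrite -gpiV gpiE. Qed.

Lemma gpiV_inordE n (a : C n) i : ((gpi a)^-1)%g (inord i) = tact (tinv (pack a)) i :> nat.
Proof. by rewrite gpiVE. Qed.

Lemma pack_ginv n (x : C n) : pack (ginv n x) = tinv (pack x).
Proof. by []. Qed.

Lemma pack_gface n i (x : C n.+1) : pack (gface n i x) = tface i (pack x).
Proof. by []. Qed.

Lemma GaMor_eq n n' (e : n = n') (a f : C n) (a' f' : C n') :
  pack a = pack a' -> pack f = pack f' -> cast (GaMor C) e (gpi a, f) = (gpi a', f').
Proof. by case: n' / e a' f' => a' f' /pack_inj -> /pack_inj ->. Qed.

Ltac unpack :=
  repeat progress rewrite ?pack_ginv ?pack_gface ?pack_cast ?gpiV_inordE ?pack_gocomp ?tinvK.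

Lemma Gamma_groupoid n : is_groupoid (Gamma C) n.
Proof.
split; [|split; [|split; [|split]]] => /=.
- by move=> s; rewrite gpi1 invg1 /smul mul1g.
- case=> s f [s' g] /= <-; split => //.
  by rewrite /smul gpiM /smul invgM mulgA.
- by case=> s f; rewrite gmulr1 gmul1.
- by case=> s f [s' g] [s'' h] _ _; rewrite gmulA.
- case=> s f; exists (smul s (gpi f)^-1%g, ginv n f) => /=.
  by rewrite gmulV gmulVr /smul gpiV invgK mulgA mulgV mul1g.
Qed.

Lemma gface1 n k : k <= n.+1 -> gface n k (gone C n.+1) = gone C n.
Proof. by move=> le_k; apply: pack_inj; rewrite pack_gface tface1. Qed.

Lemma Gamma_face_functor n i : i <= n.+1 ->
  is_functor (@dOb (Gamma C) n i) (@dMor (Gamma C) n i).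
Proof.
move=> le_i; have le_idx (s : Sn n.+1) : (s^-1)%g (inord i) <= n.+1.
  by rewrite -ltnS ltn_ord.
split; [|split; [|split]] => //=.
- case=> s f /=; have [a <-] := gpi_surj s.
  rewrite gpiV invgK -[((gpi f)^-1)%g]gpiV -!gpiM -!gpi_face // -gpiM.
  by rewrite gface_mulE // gpiVE.
- by move=> s; rewrite ginv1 gface1 ?ginv1.
- case=> s f [s' g] /= eq_tgt; congr (_, _).
  rewrite ginvM gface_mulE ?ginvK ?ginvM //.
  congr (gmul _ _ _); congr (ginv _ (gface _ _ _)).
  by rewrite -eq_tgt /smul invgM invgK permM gpiE inord_val.
Qed.

Lemma Gamma_semisimplicial_mor : semisimplicial (@dMor (Gamma C)).
Proof.
move=> n i j [s f] lt_ij le_j /=; have [a <-] := gpi_surj s.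
rewrite -!gpi_face; try lia.
apply: (GaMor_eq erefl); first by rewrite !pack_gface tface_face.
unpack; rewrite tactV_face_lt ?tactV_face_gt ?dim_pack; try lia.
by rewrite tface_face_unbump ?tactV_neq ?dim_tinv ?tactV_le ?dim_pack //; lia.
Qed.

Lemma Gamma_comp_bifunctor n m i : i <= n ->
  is_bifunctor (@cOb (Gamma C) n m i) (@cMor (Gamma C) n m i).
Proof.
move=> le_i; have le_idx (s : Sn n) : (s^-1)%g (inord i) <= n by rewrite -ltnS ltn_ord.
split; [|split; [|split]] => //=.
- case=> s f [t g] /=; have [a <-] := gpi_surj s; have [b <-] := gpi_surj t.
  rewrite gpiV invgK -[((gpi f)^-1)%g]gpiV -[((gpi g)^-1)%g]gpiV.
  rewrite -!gpiM !socomp_gpi -gpiM; congr gpi; apply: pack_inj.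
  by rewrite -tmul_pack; unpack; rewrite !inordK // -!tmul_pack tocompM.
- move=> s t; rewrite !ginv1; congr (_, _); apply: pack_inj.
  by rewrite pack_ginv pack_gocomp tocomp1 ?tinv1.
- case=> s f [s' f'] [t g] [t' g'] /= eq_s' eq_t'; congr (_, _); apply: pack_inj.
  rewrite -tmul_pack !pack_ginv !pack_gocomp !ginvM -!tmul_pack tocompM //.
  rewrite tinvM ?dim_tocomp ?tact_le //; congr (tmul (tinv (tocomp _ _ _)) _).
  by rewrite pack_ginv tinvK /tact /= inord_val -eq_s' /smul invgM invgK permM gpiE.
Qed.

Lemma pack_gone n : pack (gone C n) = tone n.
Proof. by []. Qed.

Lemma cast_GaMor a b (e : a = b) (s : Sn a) (g : C a) :
  cast (GaMor C) e (s, g) = (cast Sn e s, cast C e g).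
Proof. by case: b / e. Qed.

Lemma Gamma_unit_l n (v : GaMor C n) : @cMor (Gamma C) 0 n 0 (@idm (Gamma C) 0 1%g) v = v.
Proof.
case: v => s f /=; have [a <-] := gpi_surj s.
rewrite -(gpi1 0) socomp_gpi; apply: (GaMor_eq erefl).
  by unpack; rewrite inordK // pack_gone tone0_tocomp.
by unpack; rewrite pack_gone tinv1 tact1 // tone0_tocomp tinvK.
Qed.

Lemma Gamma_unit_r n (u : GaMor C n) i : i <= n ->
  cast (GaMor C) (addn0 n) (@cMor (Gamma C) n 0 i u (@idm (Gamma C) 0 1%g)) = u.
Proof.
case: u => s f /= le_i; have [a <-] := gpi_surj s.
rewrite -(gpi1 0) socomp_gpi; apply: GaMor_eq.
  by unpack; rewrite inordK // pack_gone tocomp_tone0.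
by unpack; rewrite pack_gone tinv1 tocomp_tone0 ?tinvK ?tactV_le.
Qed.

Lemma Gamma_compA l m n (x : GaMor C l) (y : GaMor C m) (z : GaMor C n) i j :
  i <= l -> j <= m ->
  cast (GaMor C) (addnA l m n) (@cMor (Gamma C) l (m + n) i x (@cMor (Gamma C) m n j y z)) =
  @cMor (Gamma C) (l + m) n (i + j) (@cMor (Gamma C) l m i x y) z.
Proof.
case: x => sx fx; case: y => sy fy; case: z => sz fz /= le_i le_j.
have [ax <-] := gpi_surj sx; have [ay <-] := gpi_surj sy; have [az <-] := gpi_surj sz.
rewrite !socomp_gpi; apply: GaMor_eq.
  by unpack; rewrite !inordK ?tocompA ?dim_pack //; lia.
unpack; rewrite !inordK ?dim_tocomp ?dim_pack; try lia.
by rewrite tactV_tocomp_in ?tocompA ?tactV_le.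
Qed.

Lemma Gamma_compAC l m n (x : GaMor C l) (y : GaMor C m) (z : GaMor C n) i k :
  i < k -> k <= l ->
  cast (GaMor C) (addnAC l m n) (@cMor (Gamma C) (l + m) n (k + m) (@cMor (Gamma C) l m i x y) z) =
  @cMor (Gamma C) (l + n) m i (@cMor (Gamma C) l n k x z) y.
Proof.
case: x => sx fx; case: y => sy fy; case: z => sz fz /= lt_ik le_k.
have [ax <-] := gpi_surj sx; have [ay <-] := gpi_surj sy; have [az <-] := gpi_surj sz.
rewrite !socomp_gpi; apply: GaMor_eq.
  by unpack; rewrite !inordK ?tocompAC ?dim_pack //; lia.
unpack; rewrite !inordK ?dim_tocomp ?dim_pack; try lia.
rewrite tactV_tocomp_gt ?tactV_tocomp_lt //.
by rewrite tocompAC_bumpn ?tactV_neq ?tactV_le ?dim_pack //; lia.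
Qed.

Lemma Gamma_face_comp_in l m (x : GaMor C l) (y : GaMor C m.+1) i j : i <= l -> j <= m.+1 ->
  @dMor (Gamma C) (l + m) (i + j) (cast (GaMor C) (addnS l m) (@cMor (Gamma C) l m.+1 i x y)) =
  @cMor (Gamma C) l m i x (@dMor (Gamma C) m j y).
Proof.
case: x => sx fx; case: y => sy fy /= le_i le_j.
have [ax <-] := gpi_surj sx; have [ay <-] := gpi_surj sy.
rewrite !socomp_gpi cast_GaMor -gpi_cast /= -!gpi_face ?socomp_gpi; try lia.
apply: (GaMor_eq erefl).
  by unpack; rewrite !inordK ?tface_tocomp_in ?dim_pack //; lia.
unpack; rewrite !inordK ?dim_tocomp ?dim_pack; try lia.
by rewrite tactV_tocomp_in ?tface_tocomp_in ?dim_tinv ?dim_pack ?tactV_le.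
Qed.

Lemma Gamma_face_comp_lt l n (x : GaMor C l.+1) (z : GaMor C n) i k : i < k -> k <= l.+1 ->
  @dMor (Gamma C) (l + n) i (cast (GaMor C) (addSn l n) (@cMor (Gamma C) l.+1 n k x z)) =
  @cMor (Gamma C) l n k.-1 (@dMor (Gamma C) l i x) z.
Proof.
case: x => sx fx; case: z => sz fz /= lt_ik le_k.
have [ax <-] := gpi_surj sx; have [az <-] := gpi_surj sz.
rewrite !socomp_gpi cast_GaMor -gpi_cast /= -!gpi_face ?socomp_gpi; try lia.
apply: (GaMor_eq erefl).
  by unpack; rewrite !inordK ?tface_tocomp_lt ?dim_pack //; lia.
unpack; rewrite !inordK ?dim_tocomp ?dim_pack; try lia.
rewrite tactV_tocomp_lt ?tactV_face_gt ?dim_pack //.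
by rewrite tface_tocomp_out ?tactV_neq ?dim_tinv ?tactV_le ?dim_pack //; lia.
Qed.

Lemma Gamma_face_comp_gt l m (x : GaMor C l.+1) (y : GaMor C m) i k : i < k -> k <= l.+1 ->
  @dMor (Gamma C) (l + m) (k + m) (cast (GaMor C) (addSn l m) (@cMor (Gamma C) l.+1 m i x y)) =
  @cMor (Gamma C) l m i (@dMor (Gamma C) l k x) y.
Proof.
case: x => sx fx; case: y => sy fy /= lt_ik le_k.
have [ax <-] := gpi_surj sx; have [ay <-] := gpi_surj sy.
rewrite !socomp_gpi cast_GaMor -gpi_cast /= -!gpi_face ?socomp_gpi; try lia.
apply: (GaMor_eq erefl).
  by unpack; rewrite !inordK; [apply: tface_tocomp_gt | ..]; rewrite ?dim_pack; lia.
unpack; rewrite !inordK ?dim_tocomp ?dim_pack; try lia.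
rewrite tactV_tocomp_gt ?tactV_face_lt ?dim_pack //.
by rewrite tface_tocomp_out ?tactV_neq ?dim_tinv ?tactV_le ?dim_pack //; lia.
Qed.

Lemma Gamma_operad_laws_mor :
  operad_laws (@dMor (Gamma C)) (@cMor (Gamma C)) (@idm (Gamma C) 0 1%g).
Proof.
split; first exact: Gamma_unit_l.
split; first exact: Gamma_unit_r.
split; first exact: Gamma_compA.
split; first exact: Gamma_compAC.
split; first exact: Gamma_face_comp_in.
split; first exact: Gamma_face_comp_lt.
exact: Gamma_face_comp_gt.
Qed.

End OperadicCSG.

Theorem theorem3p6 (C : CSG) :
  is_symmetric C -> is_ambi_contractible C -> is_monoidal C -> is_operadic C ->
  is_shifted_operad (Gamma C).
Proof.
move=> HS HA HM HO.
split; first exact: Gamma_groupoid.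
split; first exact: Gamma_face_functor.
split; first by apply: semisimplicial_src => //; exact: Gamma_semisimplicial_mor.
split; first exact: Gamma_semisimplicial_mor.
split; first exact: Gamma_comp_bifunctor.
exists 1%g; split; last exact: Gamma_operad_laws_mor.
by apply: operad_laws_src => //; exact: Gamma_operad_laws_mor.
Qed.
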